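(* Let $\Lambda\subset\mathbb{R}^3$ be a set of points with $0\in\Lambda$ and $|u-u'|\ge 2$ for all distinct $u,u'\in\Lambda$. Let $v_1,\dots,v_n\in\Lambda$ satisfy $2\le |v_i|\le 2.51$ for all $i$. Suppose that the radial projections of $v_1,\dots,v_n$ to the unit sphere, taken in this cyclic order, are the corners of a simple closed spherical polygon whose sides are the radial projections of the segments $[v_i,v_{i+1}]$ (indices mod $n$), and that this polygon bounds a convex region on the unit sphere, i.e. all its interior angles are less than $\pi$. Then $n\le 7$.
   Context: Throughout, points of $\Lambda$ are the centers of a packing of unit balls; the height of a point $v$ is $|v|$. In the paper this polygon is a convex subregion of a standard region: its corners are packing centers of height at most $2.51$ and its bounding edges are segments between consecutive corners. A spherical region is called convex if all of its interior angles are less than $\pi$. *)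

From HB Require Import structures.
From mathcomp Require Import all_boot all_order all_algebra.
From mathcomp Require Import reals.
Set Implicit Arguments. Unset Strict Implicit. Unset Printing Implicit Defensive.
Import Order.TTheory GRing.Theory Num.Theory.
Local Open Scope ring_scope.

Section Defs.
Variable R : realType.
Notation pt := 'rV[R]_3.

Definition enorm (u : pt) : R := Num.sqrt (\sum_(k < 3) u 0 k ^+ 2).
Definition edist (u w : pt) : R := enorm (u - w).

Definition radproj (u : pt) : pt := (enorm u)^-1 *: u.

(* Triple product det[a; b; c]: its sign tells on which side of the great
   circle through a and b (the plane spanned by a, b) the point c lies. *)
Definition det3 (a b c : pt) : R :=
  a 0 0 * (b 0 1 * c 0 2 - b 0 2 * c 0 1)
  - a 0 1 * (b 0 0 * c 0 2 - b 0 2 * c 0 0)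
  + a 0 2 * (b 0 0 * c 0 1 - b 0 1 * c 0 0).

Definition packing_with_origin (Lam : pt -> Prop) : Prop :=
  Lam 0 /\ forall u w, Lam u -> Lam w -> u <> w -> 2 <= edist u w.

(* The points p_0, ..., p_(n-1) of the unit sphere, in this cyclic order
   (successor of i is ordS i, i.e. i+1 mod n), are the corners of a simple
   closed spherical polygon with sides the great-circle arcs [p_i, p_(i+1)]
   bounding a convex region (all interior angles < pi): equivalently, for a
   consistent orientation, every corner other than p_i, p_(i+1) lies strictly
   on the inner side of the great circle carrying the side [p_i, p_(i+1)]. *)
Definition convex_spherical_polygon (n : nat) (p : 'I_n -> pt) : Prop :=
  (3 <= n)%N /\
  ((forall i j : 'I_n, j != i -> j != ordS i -> 0 < det3 (p i) (p (ordS i)) (p j))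
   \/
   (forall i j : 'I_n, j != i -> j != ordS i -> det3 (p i) (p (ordS i)) (p j) < 0)).

End Defs.

From HB Require Import structures.
From mathcomp Require Import all_boot all_order all_algebra.
From mathcomp Require Import reals trigo.
From mathcomp Require Import ring lra zify.
Import Order.TTheory GRing.Theory Num.Theory.
Local Open Scope ring_scope.
Set Implicit Arguments. Unset Strict Implicit. Unset Printing Implicit Defensive.

(* Two consecutive corners are distinct packing centres, hence at distance at
   least 2; as their heights lie in [2, 2.51], the side they span subtends an
   angle greater than pi/4 at the origin.  On the other hand the perimeter of a
   convex spherical polygon is at most 2 pi.  Hence n pi/4 < 2 pi, i.e. n <= 7. *)

Section ArcCosine.
Variable R : realType.
Implicit Types r s t x y : R.

Lemma acos_itv x : -1 <= x <= 1 -> acos x \in `[0, pi].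
Proof. by move=> hx; rewrite in_itv /= acos_ge0 // acos_lepi. Qed.

Lemma ltr_acos : {in `[-1, 1] &, {mono @acos R : x y /~ y < x}}.
Proof.
move=> x y; rewrite !in_itv /= => hx hy.
by rewrite -ltr_cos ?acosK ?acos_itv ?in_itv.
Qed.

Lemma ler_acos : {in `[-1, 1] &, {mono @acos R : x y /~ x <= y}}.
Proof. by apply: le_nmono_in => x y hx hy; rewrite ltr_acos. Qed.

Lemma cos_itv x : -1 <= cos x <= 1.
Proof. by rewrite cos_geN1 cos_le1. Qed.

(* [1 + 2 r s t - r^2 - s^2 - t^2] is the Gram determinant of three unit
   vectors with pairwise cosines [r], [s], [t]. *)
Lemma acos_triangle r s t : -1 <= r <= 1 -> -1 <= s <= 1 -> -1 <= t <= 1 ->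
  0 <= 1 + 2 * r * s * t - r ^+ 2 - s ^+ 2 - t ^+ 2 ->
  acos r <= acos s + acos t.
Proof.
move=> hr hs ht hgram.
have [/(le_trans (acos_lepi hr))//|st_lt_pi] := lerP pi (acos s + acos t).
have st_itv : acos s + acos t \in `[0, pi].
  by rewrite in_itv /= (ltW st_lt_pi) addr_ge0 // acos_ge0.
rewrite -(cosK st_itv) ler_acos ?in_itv ?cos_itv //.
rewrite cosD !acosK ?in_itv // !sin_acos // -sqrtrM; last by nra.
have [|st_gt_r] := lerP (s * t - r) 0.
  by have := sqrtr_ge0 ((1 - s ^+ 2) * (1 - t ^+ 2)); lra.
suff : s * t - r <= Num.sqrt ((1 - s ^+ 2) * (1 - t ^+ 2)) by lra.
by rewrite -(ger0_norm (ltW st_gt_r)) -sqrtr_sqr ler_wsqrtr //; nra.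
Qed.

(* For unit vectors [u], [w] with cosine [r], [a + b r] and [a r + b] are the
   cosines of the angles from [u] and from [w] to the unit vector [a u + b w]. *)
Lemma acos_split r a b : -1 <= r <= 1 -> 0 <= a -> 0 <= b ->
  a ^+ 2 + b ^+ 2 + 2 * a * b * r = 1 ->
  acos r = acos (a + b * r) + acos (a * r + b).
Proof.
move=> hr ha hb hnorm.
have r2_le1 : 0 <= 1 - r ^+ 2 by nra.
have e1 : 1 - (a + b * r) ^+ 2 = b ^+ 2 * (1 - r ^+ 2).
  by rewrite -[X in X - _ = _]hnorm; ring.
have e2 : 1 - (a * r + b) ^+ 2 = a ^+ 2 * (1 - r ^+ 2).
  by rewrite -[X in X - _ = _]hnorm; ring.
have hs : -1 <= a + b * r <= 1.
  have : 0 <= b ^+ 2 * (1 - r ^+ 2) by rewrite mulr_ge0 ?sqr_ge0.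
  by rewrite -e1 => h; apply/andP; split; nra.
have ht : -1 <= a * r + b <= 1.
  have : 0 <= a ^+ 2 * (1 - r ^+ 2) by rewrite mulr_ge0 ?sqr_ge0.
  by rewrite -e2 => h; apply/andP; split; nra.
have sum_itv : acos (a + b * r) + acos (a * r + b) \in `[0, pi].
  rewrite in_itv /= addr_ge0 ?acos_ge0 //=.
  have : acos (a * r + b) <= acos (- (a + b * r)).
    by rewrite ler_acos ?in_itv //=; nra.
  by rewrite acosN //; lra.
rewrite -[in RHS](cosK sum_itv) cosD !acosK ?in_itv // !sin_acos // e1 e2.
rewrite -sqrtrM ?mulr_ge0 ?sqr_ge0 //.
have -> : b ^+ 2 * (1 - r ^+ 2) * (a ^+ 2 * (1 - r ^+ 2)) = (a * b * (1 - r ^+ 2)) ^+ 2.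
  by ring.
rewrite sqrtr_sqr ger0_norm ?mulr_ge0 //; congr acos.
by transitivity (r * (a ^+ 2 + b ^+ 2 + 2 * a * b * r)); [rewrite hnorm mulr1 | ring].
Qed.

Lemma cos_pi4_gt : 7 / 10 < cos (pi / 4 : R).
Proof.
have hpi := @pi_gt0 R.
have cos_gt0 : 0 < cos (pi / 4 : R) by apply: cos_gt0_pihalf; lra.
have := cos_mulr2n (pi / 4 : R).
rewrite (_ : pi / 4 *+ 2 = pi / 2); last by rewrite mulr2n; field.
by rewrite cos_pihalf mulr2n => h; nra.
Qed.

End ArcCosine.

Section SphericalGeometry.
Variable R : realType.
Local Notation pt := 'rV[R]_3.
Implicit Types u w x y z q : pt.

Definition dot u w : R := u 0 0 * w 0 0 + u 0 1 * w 0 1 + u 0 2 * w 0 2.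

Definition angle u w : R := acos (dot u w).

Definition on_arc q u w := exists a b : R, [/\ 0 <= a, 0 <= b & q = a *: u + b *: w].

Lemma row3_eq u w : u 0 0 = w 0 0 -> u 0 1 = w 0 1 -> u 0 2 = w 0 2 -> u = w.
Proof.
move=> e0 e1 e2; apply/rowP => -[[|[|[|//]]] hk].
- by have -> : Ordinal hk = 0 by apply: val_inj.
- by have -> : Ordinal hk = 1 by apply: val_inj.
- by have -> : Ordinal hk = 2 by apply: val_inj.
Qed.

Lemma dotC u w : dot u w = dot w u.
Proof. by rewrite /dot; ring. Qed.

Lemma angleC u w : angle u w = angle w u.
Proof. by rewrite /angle dotC. Qed.

Lemma dot_ge0 u : 0 <= dot u u.
Proof. by rewrite /dot -!expr2 !addr_ge0 ?sqr_ge0. Qed.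

Lemma dot_gt0 u : u != 0 -> 0 < dot u u.
Proof.
rewrite lt_def dot_ge0 andbT; apply: contra => /eqP.
rewrite /dot -!expr2 => /eqP; rewrite !paddr_eq0 ?addr_ge0 ?sqr_ge0 // !sqrf_eq0.
by case/andP=> /andP[/eqP h0 /eqP h1] /eqP h2; apply/eqP/row3_eq; rewrite mxE.
Qed.

Lemma dotNl u w : dot (- u) w = - dot u w.
Proof. by rewrite /dot !mxE; ring. Qed.

Lemma dotNr u w : dot u (- w) = - dot u w.
Proof. by rewrite /dot !mxE; ring. Qed.

Lemma det3N u w x : det3 (- u) (- w) (- x) = - det3 u w x.
Proof. by rewrite /det3 !mxE; ring. Qed.

Lemma det3_cycle u w x : det3 u w x = det3 w x u.
Proof. by rewrite /det3; ring. Qed.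

Lemma det3_alternate u w : det3 u u w = 0.
Proof. by rewrite /det3; ring. Qed.

Lemma lagrange_identity u w : dot u u * dot w w - dot u w ^+ 2 =
  (u 0 0 * w 0 1 - u 0 1 * w 0 0) ^+ 2 + (u 0 0 * w 0 2 - u 0 2 * w 0 0) ^+ 2
  + (u 0 1 * w 0 2 - u 0 2 * w 0 1) ^+ 2.
Proof. by rewrite /dot; ring. Qed.

Lemma gram_det3 u x w :
  dot u u * dot x x * dot w w + 2 * dot u w * dot u x * dot x w
  - dot u u * dot x w ^+ 2 - dot x x * dot u w ^+ 2 - dot w w * dot u x ^+ 2
  = det3 u x w ^+ 2.
Proof. by rewrite /dot /det3; ring. Qed.

Lemma dot_itv u w : dot u u = 1 -> dot w w = 1 -> -1 <= dot u w <= 1.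
Proof.
move=> u1 w1; have := lagrange_identity u w; rewrite u1 w1 mul1r => h.
have : dot u w ^+ 2 <= 1 by rewrite -subr_ge0 h !addr_ge0 ?sqr_ge0.
by move=> h2; apply/andP; split; nra.
Qed.

Lemma angle_triangle u x w : dot u u = 1 -> dot x x = 1 -> dot w w = 1 ->
  angle u w <= angle u x + angle x w.
Proof.
move=> u1 x1 w1; apply: acos_triangle; rewrite ?dot_itv //.
have := gram_det3 u x w; rewrite u1 w1 x1 !mul1r => h.
by have := sqr_ge0 (det3 u x w); lra.
Qed.

Lemma angle_split u q w : dot u u = 1 -> dot q q = 1 -> dot w w = 1 ->
  on_arc q u w -> angle u w = angle u q + angle q w.
Proof.
move=> u1 q1 w1 [a [b [a0 b0 qE]]].
have dot_uq : dot u q = a * dot u u + b * dot u w by rewrite qE /dot !mxE; ring.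
have dot_qw : dot q w = a * dot u w + b * dot w w by rewrite qE /dot !mxE; ring.
have dot_qq : dot q q = a ^+ 2 * dot u u + b ^+ 2 * dot w w + 2 * a * b * dot u w.
  by rewrite qE /dot !mxE; ring.
rewrite u1 w1 q1 !mulr1 in dot_uq dot_qw dot_qq.
by rewrite /angle dot_uq dot_qw; apply: acos_split; rewrite ?dot_itv.
Qed.

Lemma enorm_dot u : enorm u = Num.sqrt (dot u u).
Proof.
rewrite /enorm /dot !big_ord_recl big_ord0 addr0 !expr2 addrA.
by congr (Num.sqrt (_ * _ + _ * _ + _ * _)); congr (u 0 _); apply: val_inj.
Qed.

Lemma dot_enorm u : dot u u = enorm u ^+ 2.
Proof. by rewrite enorm_dot sqr_sqrtr ?dot_ge0. Qed.

Lemma enorm_gt0 u : u != 0 -> 0 < enorm u.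
Proof. by move=> u0; rewrite enorm_dot sqrtr_gt0 dot_gt0. Qed.

Lemma dot_radproj u w : 0 < enorm u -> 0 < enorm w ->
  dot (radproj u) (radproj w) = dot u w / (enorm u * enorm w).
Proof.
by move=> u0 w0; rewrite /radproj /dot !mxE; field; rewrite !gt_eqF.
Qed.

Lemma radproj_unit u : 0 < enorm u -> dot (radproj u) (radproj u) = 1.
Proof.
by move=> u0; rewrite dot_radproj // dot_enorm expr2 divff // mulf_neq0 ?gt_eqF.
Qed.

(* The great circle through [x0] and [x1] crosses the arc from [z] to [y] at a
   point [q] lying beyond [x1]; [q] is [a z + b y = c x1 - d x0] normalised,
   with [a], [b], [c], [d] the triple products below. *)
Lemma great_circle_cut x0 x1 z y :
  0 < det3 x0 x1 y -> det3 x0 x1 z < 0 -> 0 < det3 z y x0 -> 0 < det3 z y x1 ->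
  exists2 q, dot q q = 1 & [/\ on_arc q z y, on_arc x1 x0 q,
    forall t, 0 < det3 z y t -> 0 < det3 q y t,
    forall t, 0 < det3 x0 x1 t -> det3 x1 t q < 0 &
    0 < det3 x1 q y].
Proof.
set a := det3 x0 x1 y; set c := det3 z y x0; set d := det3 z y x1.
move=> a0; rewrite -oppr_gt0; set b := - det3 x0 x1 z => b0 c0 d0.
set w := a *: z + b *: y.
have wE : w = c *: x1 - d *: x0.
  by apply: row3_eq; rewrite !mxE /a /b /c /d /det3; ring.
have w_neq0 : w != 0.
  have : det3 x0 z w = b * c by rewrite /w /c /det3 !mxE; ring.
  have det3_0 : det3 x0 z 0 = 0 by rewrite /det3 !mxE; ring.
  by apply: contra_eqN => /eqP->; rewrite det3_0 eq_sym mulf_neq0 ?gt_eqF.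
have N0 := enorm_gt0 w_neq0; set N := enorm w in N0.
have qE1 : radproj w = (a / N) *: z + (b / N) *: y.
  by rewrite /radproj -/N /w scalerDr !scalerA !(mulrC N^-1).
have qE2 : radproj w = (c / N) *: x1 - (d / N) *: x0.
  by rewrite /radproj -/N wE scalerBr !scalerA !(mulrC N^-1).
exists (radproj w); first exact: radproj_unit.
split.
- by exists (a / N), (b / N); rewrite !divr_ge0 ?ltW.
- exists (d / c), (N / c); rewrite !divr_ge0 ?ltW //; split=> //.
  by apply: row3_eq; rewrite qE2 !mxE; field; rewrite !gt_eqF.
- move=> t t_side; have -> : det3 (radproj w) y t = a / N * det3 z y t.
    by rewrite qE1 /det3 !mxE; ring.
  by rewrite !mulr_gt0 ?invr_gt0.
- move=> t t_side; have -> : det3 x1 t (radproj w) = - (d / N * det3 x0 x1 t).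
    by rewrite qE2 /det3 !mxE; ring.
  by rewrite oppr_lt0 !mulr_gt0 ?invr_gt0.
- have -> : det3 x1 (radproj w) y = d / N * a by rewrite qE2 /a /det3 !mxE; ring.
  by rewrite !mulr_gt0 ?invr_gt0.
Qed.

(* A convex chain [x 0, ..., x m] is no longer than the path [x 0, z, x m]
   enclosing it.  Cutting that path by the great circle through the first edge
   at [q], the triangle inequality |x 0 q| <= |x 0 z| + |z q| trades the leg
   [x 0, z] for the edge [x 0, x 1] plus [x 1, q], which leaves a shorter chain
   enclosed by [x 1, q, x m]. *)
Lemma convex_chain_angle_le m (x : nat -> pt) z : (0 < m)%N ->
  dot z z = 1 -> (forall k, (k <= m)%N -> dot (x k) (x k) = 1) ->
  (forall k j, (k < m)%N -> (j <= m)%N -> j <> k -> j <> k.+1 ->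
     0 < det3 (x k) (x k.+1) (x j)) ->
  det3 (x 0%N) (x 1%N) z < 0 -> 0 < det3 (x 0%N) z (x m) ->
  (forall k, (0 < k < m)%N -> 0 < det3 z (x m) (x k)) ->
  \sum_(k < m) angle (x k) (x k.+1) <= angle (x 0%N) z + angle z (x m).
Proof.
elim: m x z => [//|m IH] x z _ z1 x_unit convex z_out z_x0 z_xk.
case: m IH x_unit convex z_x0 z_xk => [|m] IH x_unit convex z_x0 z_xk.
  by rewrite big_ord1; apply: angle_triangle; rewrite ?x_unit.
have xM_in : 0 < det3 (x 0%N) (x 1%N) (x m.+2) by apply: convex.
have x0_in : 0 < det3 z (x m.+2) (x 0%N) by rewrite -det3_cycle.
have [q q1 [q_zy x1_x0q q_side x1_side x1_q]] :=
  great_circle_cut xM_in z_out x0_in (z_xk 1%N isT).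
have chain_q :
    \sum_(k < m.+1) angle (x k.+1) (x k.+2) <= angle (x 1%N) q + angle q (x m.+2).
  apply: (IH (fun k => x k.+1)) => //.
  - by move=> k k_le; apply: x_unit.
  - by move=> k j k_lt j_le jk jk1; apply: convex => //; lia.
  - by apply: x1_side; apply: convex.
  - by move=> k k_lt; apply: q_side; apply: z_xk; lia.
have := angle_split z1 q1 (x_unit _ (leqnn _)) q_zy.
have := angle_split (x_unit 0%N isT) (x_unit 1%N isT) q1 x1_x0q.
have := angle_triangle (x_unit 0%N isT) z1 q1.
by rewrite big_ord_recl /bump /=; lra.
Qed.

Lemma angleNr u w : dot u u = 1 -> dot w w = 1 -> angle u (- w) = pi - angle u w.
Proof. by move=> u1 w1; rewrite /angle dotNr acosN ?dot_itv. Qed.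

(* The chain [x 1, ..., x (m + 2)] is enclosed by the path through the antipode
   [- x 0], whose legs have lengths [pi - |x 0 x 1|] and [pi - |x (m + 2) x 0|]. *)
Lemma closed_chain_perimeter_le m (x : nat -> pt) :
  (forall k, dot (x k) (x k) = 1) ->
  (forall k j, (k < m.+2)%N -> (j < m.+3)%N -> j != k -> j != k.+1 ->
     0 < det3 (x k) (x k.+1) (x j)) ->
  (forall j, (0 < j < m.+2)%N -> 0 < det3 (x m.+2) (x 0%N) (x j)) ->
  \sum_(k < m.+2) angle (x k) (x k.+1) + angle (x m.+2) (x 0%N) <= 2 * pi.
Proof.
move=> x_unit edge closing.
have chain : \sum_(k < m.+1) angle (x k.+1) (x k.+2) <=
    angle (x 1%N) (- x 0%N) + angle (- x 0%N) (x m.+2).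
  apply: (convex_chain_angle_le (x := fun k => x k.+1)) => //.
  - by rewrite dotNl dotNr opprK.
  - by move=> k j k_lt j_le jk jk1; apply: edge; lia.
  - have -> : det3 (x 1%N) (x 2%N) (- x 0%N) = - det3 (x 1%N) (x 2%N) (x 0%N).
      by rewrite /det3 !mxE; ring.
    by rewrite oppr_lt0 edge.
  - have -> : det3 (x 1%N) (- x 0%N) (x m.+2) = det3 (x 0%N) (x 1%N) (x m.+2).
      by rewrite /det3 !mxE; ring.
    by rewrite edge.
  - move=> k k_in.
    have -> : det3 (- x 0%N) (x m.+2) (x k.+1) = det3 (x m.+2) (x 0%N) (x k.+1).
      by rewrite /det3 !mxE; ring.
    by apply: closing; lia.
rewrite big_ord_recl /bump /=; move: chain.
by rewrite angleNr // (angleC (- x 0%N)) angleNr // (angleC (x 1%N)); lra.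
Qed.

Lemma positive_polygon_perimeter_le n (p : 'I_n -> pt) : (3 <= n)%N ->
  (forall i, dot (p i) (p i) = 1) ->
  (forall i j : 'I_n, j != i -> j != ordS i -> 0 < det3 (p i) (p (ordS i)) (p j)) ->
  \sum_(i < n) angle (p i) (p (ordS i)) <= 2 * pi.
Proof.
move: n p => [|[|[|m]]] p // _ p1 convex.
pose x k := p (inord k).
have ordS_inord k : (k < m.+3)%N -> ordS (inord k : 'I_m.+3) = inord (k.+1 %% m.+3)%N.
  by move=> k_lt; apply: val_inj; rewrite /= !inordK ?ltn_pmod.
have x_convex k j : (k < m.+3)%N -> (j < m.+3)%N -> j != k -> j != (k.+1 %% m.+3)%N ->
    0 < det3 (x k) (x (k.+1 %% m.+3)%N) (x j).
  move=> k_lt j_lt jk jk1; rewrite /x -ordS_inord //; apply: convex.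
    by apply: contra jk => /eqP/(congr1 val)/=; rewrite !inordK // => ->.
  rewrite ordS_inord //; apply: contra jk1 => /eqP/(congr1 val)/=.
  by rewrite !inordK ?ltn_pmod // => ->.
have -> : \sum_(i < m.+3) angle (p i) (p (ordS i)) =
          \sum_(i < m.+3) angle (x i) (x (i.+1 %% m.+3)%N).
  by apply: eq_bigr => i _; rewrite /x -ordS_inord // !inord_val.
rewrite big_ord_recr /= modnn.
rewrite (eq_bigr (fun i : 'I_m.+2 => angle (x i) (x i.+1))) => [|i _]; last first.
  by rewrite modn_small // ltnS.
apply: closed_chain_perimeter_le => [k | k j k_lt j_lt jk jk1 | j j_in].
- exact: p1.
- by rewrite -[k.+1](@modn_small _ m.+3) ?x_convex ?modn_small //; lia.
- by rewrite -(modnn m.+3) x_convex ?modnn //; lia.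
Qed.

Lemma convex_polygon_perimeter_le n (p : 'I_n -> pt) :
  (forall i, dot (p i) (p i) = 1) -> convex_spherical_polygon p ->
  \sum_(i < n) angle (p i) (p (ordS i)) <= 2 * pi.
Proof.
move=> p1 [n3 [pos | neg]]; first exact: positive_polygon_perimeter_le.
have dotNN u : dot (- u) (- u) = dot u u by rewrite dotNl dotNr opprK.
rewrite (eq_bigr (fun i => angle (- p i) (- p (ordS i)))) => [|i _]; last first.
  by rewrite /angle dotNl dotNr opprK.
apply: positive_polygon_perimeter_le => // [i | i j ji jSi]; first by rewrite dotNN.
by rewrite det3N oppr_gt0; apply: neg.
Qed.

Lemma ordS_ordS_neq n (i : 'I_n) : (2 < n)%N ->
  ordS (ordS i) != i /\ ordS (ordS i) != ordS i.
Proof.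
move=> n_gt2; have i_lt := ltn_ord i.
have modS k : (k < n)%N -> (k.+1 %% n = if k.+1 < n then k.+1 else 0)%N.
  move=> k_lt; case: ltnP => [/modn_small // | n_le].
  by rewrite (_ : k.+1 = n) ?modnn //; apply/eqP; rewrite eqn_leq k_lt.
split; apply/eqP => /(congr1 val) /=; rewrite (modS i) //.
all: by case: ltnP => iS; rewrite modS; try case: ltnP; lia.
Qed.

Lemma convex_polygon_ordS_neq n (p : 'I_n -> pt) (i : 'I_n) :
  convex_spherical_polygon p -> p (ordS i) != p i.
Proof.
move=> [n3 sides]; apply/eqP => pSi.
have [j_i j_Si] := ordS_ordS_neq i n3.
have : det3 (p i) (p (ordS i)) (p (ordS (ordS i))) = 0 by rewrite pSi det3_alternate.
by case: sides => /(_ i _ j_i j_Si); lra.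
Qed.

(* The cosine of the angle is at most [(|v|^2 + |w|^2 - 4) / (2 |v| |w|)],
   which stays below [0.7 < cos (pi / 4)] for heights in [[2, 2.51]]. *)
Lemma radproj_angle_gt_pi4 v w : 2 <= enorm v <= 251 / 100 -> 2 <= enorm w <= 251 / 100 ->
  2 <= edist v w -> pi / 4 < angle (radproj v) (radproj w).
Proof.
move=> /andP[v_ge v_le] /andP[w_ge w_le] vw_ge.
have v0 : 0 < enorm v by lra.
have w0 : 0 < enorm w by lra.
have dist2 : dot (v - w) (v - w) = enorm v ^+ 2 + enorm w ^+ 2 - 2 * dot v w.
  by rewrite -!dot_enorm /dot !mxE; ring.
have : 4 <= dot (v - w) (v - w) by rewrite dot_enorm; move: vw_ge; rewrite /edist; nra.
rewrite dist2 => dist_ge.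
have cos_le : dot (radproj v) (radproj w) <= 7 / 10.
  by rewrite dot_radproj // ler_pdivrMr ?mulr_gt0 //; nra.
have pi4_itv : (pi / 4 : R) \in `[0, pi] by rewrite in_itv /=; have := @pi_gt0 R; lra.
rewrite -(cosK pi4_itv) /angle ltr_acos ?in_itv ?cos_itv ?dot_itv ?radproj_unit //=.
by have := @cos_pi4_gt R; lra.
Qed.

End SphericalGeometry.

Theorem lemma5p1p2 (R : realType) (Lam : 'rV[R]_3 -> Prop) (n : nat)
    (v : 'I_n -> 'rV[R]_3) :
  packing_with_origin Lam ->
  (forall i, Lam (v i)) ->
  (forall i, 2 <= enorm (v i) <= 251 / 100) ->
  convex_spherical_polygon (fun i => radproj (v i)) ->
  (n <= 7)%N.
Proof.
move=> [_ sep] Lam_v height convex.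
have v0 i : 0 < enorm (v i) by case/andP: (height i); lra.
have p1 i : dot (radproj (v i)) (radproj (v i)) = 1 by apply: radproj_unit.
have side i : pi / 4 < angle (radproj (v i)) (radproj (v (ordS i))).
  apply: radproj_angle_gt_pi4 => //; apply: sep => // vSi.
  by have := convex_polygon_ordS_neq i convex; rewrite /= vSi eqxx.
have n_gt0 : (0 < n)%N by case: convex; lia.
have : \sum_(i < n) (pi / 4 : R) < 2 * pi.
  apply: lt_le_trans (convex_polygon_perimeter_le p1 convex).
  by apply: ltr_sum => //; apply/hasP; exists (Ordinal n_gt0); rewrite ?mem_index_enum.
rewrite sumr_const card_ord -mulr_natl => n_pi.
have : (n%:R : R) < 8 by have := @pi_gt0 R; nra.
by rewrite -ltnS -(ltr_nat R).
Qed.
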